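(* In the even setting below, assume $N_k$ is invertible and let $c_k^0,\dots,c_k^{m-1}$ be the $n\times n$ blocks of the unique $mn\times n$ matrix $C_k=(c_k^0;\dots;c_k^{m-1})$ with $N_kC_k=F^{(k)}_{m}$. Then each $c_k^i$ is homogeneous (all entries being rational functions homogeneous of the same degree) with respect to the scaling $a_j^{2r+1}\mapsto\mu a_j^{2r+1}$, $a_j^{2r}\mapsto a_j^{2r}$, and $\deg c_k^{2\ell}=0$, $\deg c_k^{2\ell+1}=1$ for $\ell=0,\dots,s-1$.
   Context: Even setting: integers $n\ge1$, $s\ge 2$, $m=2s$. For each $k\in\mathbb Z$ let $a_k^0,\dots,a_k^{m-1}$ be $n\times n$ matrices with indeterminate entries, $N$-periodic in $k$. $Q_k$ is the $mn\times mn$ block matrix with $I_n$ in blocks $(i+1,i)$, last block column $(a_k^0;\dots;a_k^{m-1})$, $O_n$ elsewhere. $r_k=(O_n;a_k^1;O_n;a_k^3;\dots;O_n;a_k^{2s-1})$. $F^{(k)}_0=r_k$, $F^{(k)}_\ell=Q_k\cdots Q_{k+\ell-1}r_{k+\ell}$, $N_k=(F^{(k)}_0,\dots,F^{(k)}_{m-1})$. A rational function $f$ of the entries is homogeneous of degree $d$ if applying the scaling multiplies it by $\mu^d$ for all $\mu\ne0$. (The blocks $c_k^i$ are the coordinates of the map $\bar T(V_k)=(V_k,\dots,V_{k+m-1})r_k$ before normalization.) *)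

From HB Require Import structures.
From mathcomp Require Import all_boot all_order all_algebra.
Set Implicit Arguments. Unset Strict Implicit. Unset Printing Implicit Defensive.
Import Order.TTheory GRing.Theory Num.Theory.
Local Open Scope ring_scope.

Section EvenSetting.
Variables (K : fieldType) (n s : nat).
Notation m := (2 * s)%N.
(* the size mn, as a sum of m blocks of size n (block matrix convention) *)
Notation D := (\sum_(i < m) n)%N.

Variable a : int -> 'I_m -> 'M[K]_n.

Definition Qmat (k : int) : 'M[K]_D :=
  \mxblock_(i < m, j < m)
    (if (j : nat) == m.-1 then a k i
     else if (i : nat) == j.+1 then 1%:M else 0).

Definition rvec (k : int) : 'M[K]_(D, n) :=
  \mxcol_(i < m) (if odd i then a k i else 0).

Fixpoint Qprod (k : int) (l : nat) : 'M[K]_D :=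
  if l is l'.+1 then Qprod k l' *m Qmat (k + l'%:Z) else 1%:M.

Definition Fvec (k : int) (l : nat) : 'M[K]_(D, n) :=
  Qprod k l *m rvec (k + l%:Z).

Definition Nmat (k : int) : 'M[K]_D := \mxrow_(j < m) Fvec k j.

Definition Cmat (k : int) : 'M[K]_(D, n) := invmx (Nmat k) *m Fvec k m.

Definition cblk (k : int) (i : 'I_m) : 'M[K]_n := submxcol (Cmat k) i.
End EvenSetting.

Definition scale_odd (K : fieldType) (n s : nat) (mu : K)
  (a : int -> 'I_(2 * s) -> 'M[K]_n) : int -> 'I_(2 * s) -> 'M[K]_n :=
  fun k i => mu ^+ (odd i) *: a k i.

From HB Require Import structures.
From mathcomp Require Import all_boot all_order all_algebra.
From mathcomp Require Import zify.
Set Implicit Arguments. Unset Strict Implicit. Unset Printing Implicit Defensive.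
Import Order.TTheory GRing.Theory Num.Theory.
Local Open Scope ring_scope.

(* Let e_p be the p-th block unit column and x_p := e_p for p < m, so that
   x_(p+m) = sum_j x_(p+j) a_(k+p)^j is the companion recurrence of the Q's.
   Every column F_l of N_k is a combination of the x's in two ways: through the
   odd coefficients of r (indices of parity l+1), or through the recurrence
   (indices of parity l, coefficients 1 and the even a's).  Choosing for each l
   the expansion over the x's of a fixed parity o factors N_k = X_o S_o, where
   X_o = (x_o, x_(o+2), ..., x_(o+2m-2)) and the scaling multiplies the columns
   of S_o by mu or 1 according to the parity of l + o.  Since the first m
   columns of X_0 and X_1 together are the identity, invertibility of N_k is
   equivalent to that of S_0 and S_1, hence preserved by the scaling; and
   S_1 C_k = (coordinates of F_m in X_1) transforms into the claimed C_k'. *)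

Section Companion.
Variables (K : fieldType) (n s : nat).
Notation m := (2 * s)%N.
Notation D := (\sum_(i < m) n)%N.
Variable a : int -> 'I_m -> 'M[K]_n.
Variable k : int.

Definition ecol (p : nat) : 'M[K]_(D, n) :=
  \mxcol_(j < m) (if (j : nat) == p then 1%:M else 0 : 'M[K]_n).

Lemma mxcol_sum_ecol (B : 'I_m -> 'M[K]_n) :
  \mxcol_j B j = \sum_(i < m) ecol i *m B i.
Proof.
apply/mxcolP => j; rewrite mxcolK submxcol_sum.
under eq_bigr do rewrite -submxcol_mul mxcolK.
rewrite (bigD1 j) //= eqxx mul1mx big1 ?addr0 // => i ij.
by rewrite ifF ?mul0mx //; apply/negbTE; rewrite eq_sym.
Qed.

Lemma ecol_mxrow : (1%:M : 'M[K]_D) = \mxrow_(i < m) ecol i.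
Proof.
rewrite -(mxdiagZ (p_ := fun _ : 'I_m => n) 1) /mxdiag mxblockEh.
apply: eq_mxrow => i; apply: eq_mxcol => j.
by case: eqP => [->|ne]; rewrite ?conform_mx_id ?eqxx // ifF //;
  apply/negbTE/eqP => h; apply: ne; apply: val_inj.
Qed.

Lemma mxrow_ecol r (B : 'I_m -> 'M[K]_(r, n)) (u : nat) (hu : (u < m)%N) :
  \mxrow_i B i *m ecol u = B (Ordinal hu).
Proof.
rewrite mul_mxrow_mxcol (bigD1 (Ordinal hu)) //= eqxx mulmx1 big1 ?addr0 //.
by move=> i hi; rewrite [(i : nat) == u]negbTE ?mulmx0.
Qed.

Lemma Qmat_ecol t (i : nat) : (i.+1 < m)%N -> Qmat a t *m ecol i = ecol i.+1.
Proof.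
move=> him; rewrite /Qmat /ecol mul_mxblock_mxrow; apply: eq_mxcol => r.
have hi : (i < m)%N by apply: ltn_trans him.
rewrite (bigD1 (Ordinal hi)) //= eqxx mulmx1 big1 ?addr0.
  by rewrite (_ : (i == m.-1) = false) //; lia.
by move=> j jn; rewrite [(j : nat) == i]negbTE ?mulmx0.
Qed.

Lemma Qmat_ecol_last t : (0 < s)%N ->
  Qmat a t *m ecol m.-1 = \sum_(j < m) ecol j *m a t j.
Proof.
move=> hs; rewrite -mxcol_sum_ecol /Qmat /ecol mul_mxblock_mxrow.
apply: eq_mxcol => i; have hm : (m.-1 < m)%N by lia.
rewrite (bigD1 (Ordinal hm)) //= eqxx mulmx1 big1 ?addr0 // => j jn.
by rewrite [(j : nat) == m.-1]negbTE ?mulmx0.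
Qed.

(* x_p; for p >= m this is Q_k ... Q_(k+p-m) e_(m-1). *)
Definition xvec (p : nat) : 'M[K]_(D, n) :=
  Qprod a k (p.+1 - m) *m ecol (p - (p.+1 - m)).

Lemma Qprod_ecol l i : (i < m)%N -> Qprod a k l *m ecol i = xvec (l + i).
Proof.
elim: l i => [|l IH] i him.
  by rewrite /xvec add0n (_ : i.+1 - m = 0)%N ?subn0 //; lia.
rewrite /= -mulmxA; case: (ltnP i.+1 m) => h.
  by rewrite Qmat_ecol // IH // addSnnS.
rewrite /xvec (_ : (l.+1 + i).+1 - m = l.+1)%N; last by lia.
by rewrite (_ : l.+1 + i - l.+1 = i)%N /= -?mulmxA //; lia.
Qed.

Lemma xvec_small i : (i < m)%N -> xvec i = ecol i.
Proof. by move=> h; rewrite -[i]add0n -Qprod_ecol //= mul1mx. Qed.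

Lemma xvec_rec p : (0 < s)%N ->
  xvec (p + m) = \sum_(j < m) xvec (p + j) *m a (k + p%:Z) j.
Proof.
move=> hs; rewrite {1}/xvec (_ : (p + m).+1 - m = p.+1)%N; last by lia.
rewrite (_ : p + m - p.+1 = m.-1)%N; last by lia.
rewrite /= -mulmxA Qmat_ecol_last // mulmx_sumr; apply: eq_bigr => j _.
by rewrite mulmxA Qprod_ecol.
Qed.

Lemma Fvec_odd_expansion l : Fvec a k l =
  \sum_(j < m) xvec (l + j) *m (if odd j then a (k + l%:Z) j else 0).
Proof.
rewrite /Fvec /rvec mxcol_sum_ecol mulmx_sumr; apply: eq_bigr => j _.
by rewrite mulmxA Qprod_ecol.
Qed.

Lemma Fvec_even_expansion l : (0 < s)%N -> Fvec a k l =
  xvec (l + m) - \sum_(j < m) xvec (l + j) *m (if ~~ odd j then a (k + l%:Z) j else 0).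
Proof.
move=> hs; apply/eqP; rewrite xvec_rec // eq_sym subr_eq Fvec_odd_expansion.
rewrite -big_split; apply/eqP; apply: eq_bigr => j _.
by case: (odd j); rewrite /= mulmx0 ?addr0 ?add0r.
Qed.

Definition coef_odd (l p : nat) : 'M[K]_n :=
  \sum_(j < m) (if odd j && (l + j == p)%N then a (k + l%:Z) j else 0).

Definition coef_even (l p : nat) : 'M[K]_n :=
  (if (l + m == p)%N then 1%:M else 0) -
  \sum_(j < m) (if ~~ odd j && (l + j == p)%N then a (k + l%:Z) j else 0).

Definition xbasis (o : nat) : 'M[K]_D := \mxrow_(u < m) xvec (2 * u + o).

Definition xcoord (o : nat) : 'M[K]_D :=
  \mxblock_(u < m, l < m)
    (if odd (l + o) then coef_odd l (2 * u + o) else coef_even l (2 * u + o)).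

Definition Fm_coord : 'M[K]_(D, n) := \mxcol_(u < m) coef_odd m (2 * u + 1).

Lemma sum_select_parity (V : nmodType) (o p : nat) (X : V) :
  (o <= 1)%N -> odd p = odd o -> (p < m + m)%N ->
  \sum_(u < m) (if (p == 2 * u + o)%N then X else 0) = X.
Proof.
move=> ho hp hpm; have hd := odd_double_half p; rewrite -addnn hp in hd.
have hu : (p./2 < m)%N by case: (o) ho hd => [|[|//]] _ /= hd; lia.
rewrite (bigD1 (Ordinal hu)) //= ifT; last first.
  by apply/eqP; case: (o) ho hd => [|[|//]] _ /= hd; lia.
rewrite big1 ?addr0 // => u hu'; rewrite ifF //; apply/negbTE.
by apply: contra hu' => /eqP h; apply/eqP; apply: val_inj => /=; lia.
Qed.

Lemma sum_select_parity_mul (c : 'I_m -> bool) (Y : 'I_m -> 'M[K]_n) (l o : nat) :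
  (o <= 1)%N ->
  (forall j : 'I_m, c j -> odd (l + j) = odd o /\ (l + j < m + m)%N) ->
  \sum_(u < m) xvec (2 * u + o) *m
     \sum_(j < m) (if c j && (l + j == 2 * u + o)%N then Y j else 0)
  = \sum_(j < m) xvec (l + j) *m (if c j then Y j else 0).
Proof.
move=> ho hc; set DD := D; under eq_bigr do rewrite mulmx_sumr.
rewrite exchange_big; apply: eq_bigr => j _ /=.
case cj: (c j) => /=; last by rewrite mulmx0 big1 // => u _; rewrite mulmx0.
have [h1 h2] := hc j cj; rewrite -(sum_select_parity (xvec (l + j) *m Y j) ho h1 h2).
by apply: eq_bigr => u _; case: eqP => [->|]; rewrite ?mulmx0.
Qed.

Lemma xbasis_coef_odd l o : (o <= 1)%N -> odd (l + o) -> (l <= m)%N ->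
  \sum_(u < m) xvec (2 * u + o) *m coef_odd l (2 * u + o) =
  \sum_(j < m) xvec (l + j) *m (if odd j then a (k + l%:Z) j else 0).
Proof.
move=> ho hlo hl; apply: sum_select_parity_mul => // j hj.
split; last by have := ltn_ord j; lia.
by move: hlo; rewrite !oddD hj; case: (odd l); case: (odd o).
Qed.

Lemma xbasis_coef_even l o : (o <= 1)%N -> ~~ odd (l + o) -> (l < m)%N ->
  \sum_(u < m) xvec (2 * u + o) *m coef_even l (2 * u + o) =
  xvec (l + m) -
  \sum_(j < m) xvec (l + j) *m (if ~~ odd j then a (k + l%:Z) j else 0).
Proof.
move=> ho hlo hl; set DD := D; under eq_bigr do rewrite mulmxBr; rewrite sumrB.
congr (_ - _); last first.
  apply: sum_select_parity_mul => // j hj; split; last by have := ltn_ord j; lia.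
  by move: hlo; rewrite !oddD (negbTE hj); case: (odd l); case: (odd o).
rewrite -(@sum_select_parity _ o (l + m) (xvec (l + m)) ho); last by lia.
  by apply: eq_bigr => u _; case: eqP => [<-|]; rewrite ?mulmx1 ?mulmx0.
by move: hlo; rewrite (oddD l o) (oddD l m) oddM /=; case: (odd l); case: (odd o).
Qed.

Lemma Nmat_factor o : (o <= 1)%N -> (0 < s)%N -> Nmat a k = xbasis o *m xcoord o.
Proof.
move=> ho hs; rewrite /Nmat /xbasis /xcoord mul_mxrow_mxblock.
apply: eq_mxrow => l; case h: (odd (l + o)).
  by rewrite Fvec_odd_expansion -(@xbasis_coef_odd l o) // ltnW.
by rewrite Fvec_even_expansion // -(@xbasis_coef_even l o) ?h.
Qed.

Lemma Fvec_m_factor : Fvec a k m = xbasis 1 *m Fm_coord.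
Proof.
rewrite /xbasis /Fm_coord mul_mxrow_mxcol Fvec_odd_expansion (@xbasis_coef_odd m 1) //.
by rewrite (oddD m 1) oddM.
Qed.

Lemma Nmat_unitE : (0 < s)%N ->
  (Nmat a k \in unitmx) = (xcoord 0 \in unitmx) && (xcoord 1 \in unitmx).
Proof.
move=> hs; apply/idP/andP => [hN | uS01].
  have uS o : (o <= 1)%N -> xcoord o \in unitmx.
    by move=> ho; move: hN; rewrite (Nmat_factor ho hs) unitmx_mul => /andP[].
  by rewrite !uS.
have uS o : (o <= 1)%N -> xcoord o \in unitmx by case: uS01; case: o => [|[|]].
(* column i of the identity is x_i, the (i/2)-th column of X_(odd i) *)
suff : Nmat a k *m \mxrow_(i < m) (invmx (xcoord (odd i)) *m ecol i./2) = 1%:M.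
  by case/mulmx1_unit.
rewrite mul_mxrow ecol_mxrow; apply/eq_mxrowP => i.
have hi := ltn_ord i; have hd := odd_double_half i; rewrite -addnn in hd.
rewrite (@Nmat_factor (odd i)) ?leq_b1 // mulmxA mulmxK ?uS ?leq_b1 //.
have hi2 : (i./2 < m)%N by lia.
rewrite /xbasis (mxrow_ecol _ hi2) /=.
by rewrite (_ : 2 * i./2 + odd i = i)%N ?xvec_small //; lia.
Qed.

Lemma xcoord_Cmat : (0 < s)%N -> Nmat a k \in unitmx ->
  xcoord 1 *m Cmat a k = Fm_coord.
Proof.
move=> hs hN; have uX : xbasis 1 \in unitmx.
  by move: hN; rewrite (@Nmat_factor 1) // unitmx_mul => /andP[].
apply: (can_inj (mulKmx uX)); rewrite mulmxA -Nmat_factor // -Fvec_m_factor.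
by rewrite /Cmat mulKVmx.
Qed.

End Companion.

Section Scaling.
Variables (K : fieldType) (n s : nat).
Notation m := (2 * s)%N.
Variable a : int -> 'I_m -> 'M[K]_n.
Variables (k : int) (mu : K).
Notation a' := (scale_odd mu a).

Lemma coef_odd_scale l p : coef_odd a' k l p = mu *: coef_odd a k l p.
Proof.
rewrite /coef_odd scaler_sumr; apply: eq_bigr => j _.
by case: ifP => [/andP[h _]|]; rewrite ?scaler0 // /scale_odd h expr1.
Qed.

Lemma coef_even_scale l p : coef_even a' k l p = coef_even a k l p.
Proof.
rewrite /coef_even; congr (_ - _); apply: eq_bigr => j _.
by case: ifP => [/andP[/negbTE h _]|] //; rewrite /scale_odd h expr0 scale1r.
Qed.

Lemma Fm_coord_scale : Fm_coord a' k = mu *: Fm_coord a k.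
Proof.
apply/mxcolP => u; rewrite mxcolK -mul_mx_scalar -submxcol_mul mxcolK.
by rewrite coef_odd_scale mul_mx_scalar.
Qed.

Hypothesis mu_neq0 : mu != 0.

Lemma xcoord_scale_unit o : xcoord a k o \in unitmx -> xcoord a' k o \in unitmx.
Proof.
move=> uS; have e : xcoord a' k o *m
    \mxdiag_(l < m) (((if odd (l + o) then mu else 1)^-1)%:M : 'M[K]_n)
    = xcoord a k o.
  rewrite /xcoord mul_mxblock_mxdiag; apply/eq_mxblockP => u l.
  rewrite mul_mx_scalar; case: ifP => _.
    by rewrite coef_odd_scale scalerA mulVf // scale1r.
  by rewrite coef_even_scale invr1 scale1r.
by have := mulmxV uS; rewrite -{1}e -mulmxA => /mulmx1_unit [].
Qed.

(* The factor mu^(odd l) on c^l completes mu^(odd (l+1)) on column l to mu. *)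
Lemma xcoord_scale_mxcol (C : 'I_m -> 'M[K]_n) :
  xcoord a' k 1 *m \mxcol_l (mu ^+ odd l *: C l) =
  mu *: (xcoord a k 1 *m \mxcol_l C l).
Proof.
rewrite /xcoord !mul_mxblock_mxrow; apply/mxcolP => u.
rewrite -mul_mx_scalar -submxcol_mul !mxcolK mul_mx_scalar scaler_sumr.
apply: eq_bigr => l _; rewrite (oddD l 1) addbT; case: (odd l) => /=.
  by rewrite coef_even_scale expr1 -scalemxAr.
by rewrite coef_odd_scale expr0 scale1r -scalemxAl.
Qed.

End Scaling.

Theorem mainTheorem4 (K : fieldType) (n s N : nat)
  (hn : (1 <= n)%N) (hs : (2 <= s)%N) (hN : (0 < N)%N)
  (a : int -> 'I_(2 * s) -> 'M[K]_n)
  (hper : forall k : int, a (k + N%:Z) = a k)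
  (k : int) (hNk : Nmat a k \in unitmx)
  (mu : K) (hmu : mu != 0) :
  Nmat (scale_odd mu a) k \in unitmx /\
  forall i : 'I_(2 * s),
    cblk (scale_odd mu a) k i = mu ^+ (odd i) *: cblk a k i.
Proof.
have hs0 : (0 < s)%N by apply: leq_trans hs.
have uN' : Nmat (scale_odd mu a) k \in unitmx.
  move: hNk; rewrite !Nmat_unitE // => /andP[u0 u1].
  by rewrite !xcoord_scale_unit.
split => // i; rewrite {1}/cblk.
suff -> : Cmat (scale_odd mu a) k = \mxcol_l (mu ^+ odd l *: cblk a k l).
  by rewrite mxcolK.
apply: (canLR (mulKmx uN')).
rewrite (Nmat_factor _ k (leqnn 1) hs0) -mulmxA xcoord_scale_mxcol //.
by rewrite /cblk submxcolK xcoord_Cmat // -Fm_coord_scale -Fvec_m_factor.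
Qed.
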